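(* Suppose $(A,W)$ is a Pratt comonoid and $x_i$ $(i\in I)$ are elements of $W$ such that each $a\in A$ belongs to only finitely many of the $x_i$. Then $\bigcup_{i\in I}x_i\in W$.
   Context: A Pratt comonoid is a pair $(A,W)$ where $A$ is a set and $W$ is a set of subsets of $A$ such that (i) $\emptyset\in W$ and $A\in W$; (ii) whenever $C\subseteq A\times A$ is such that for every $a\in A$ both the $a$-th row $\{b\mid (a,b)\in C\}$ and the $a$-th column $\{b\mid (b,a)\in C\}$ belong to $W$ (a crossword over $W$), the diagonal $\{b\mid (b,b)\in C\}$ also belongs to $W$. *)

From mathcomp Require Import all_boot.
From mathcomp Require Import boolp classical_sets cardinality.
Set Implicit Arguments. Unset Strict Implicit. Unset Printing Implicit Defensive.
Local Open Scope classical_set_scope.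

Definition crossword (A : Type) (W : set (set A)) (C : set (A * A)) : Prop :=
  forall a : A, W [set b | C (a, b)] /\ W [set b | C (b, a)].

Definition diagonal (A : Type) (C : set (A * A)) : set A := [set b | C (b, b)].

Definition pratt_comonoid (A : Type) (W : set (set A)) : Prop :=
  [/\ W set0, W setT &
      forall C : set (A * A), crossword W C -> W (diagonal C)].

From Pilot Require Import Defs.
From mathcomp Require Import all_boot.
From mathcomp Require Import boolp classical_sets cardinality.
Local Open Scope classical_set_scope.

(* Let C relate a and b when some x_i contains both. Its diagonal is the union
   of the x_i, and its row (= column) at a is the union of the finitely many
   x_i containing a. Finite unions stay in W, because the crossword
   [X a \/ Y b] has diagonal X `|` Y and rows and columns among X, Y and setT;
   so the crossword axiom applies to C. *)

Section PrattComonoid.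

Variables (A : Type) (W : set (set A)).
Hypothesis PW : pratt_comonoid W.

Lemma pratt_setU (X Y : set A) : W X -> W Y -> W (X `|` Y).
Proof.
move=> WX WY; have [_ WT crossW] := PW.
pose C : set (A * A) := [set p | X p.1 \/ Y p.2].
have -> : X `|` Y = Defs.diagonal C by [].
apply: crossW => a; split.
- have [Xa|nXa] := pselect (X a).
    by rewrite (_ : [set b | C (a, b)] = setT) //; apply/seteqP; split=> b //= _; left.
  by rewrite (_ : [set b | C (a, b)] = Y) //; apply/seteqP; split=> b /=; [case|right].
- have [Ya|nYa] := pselect (Y a).
    by rewrite (_ : [set b | C (b, a)] = setT) //; apply/seteqP; split=> b //= _; right.
  by rewrite (_ : [set b | C (b, a)] = X) //; apply/seteqP; split=> b /=; [case|left].
Qed.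

Lemma pratt_bigcup_finite (I : Type) (F : set I) (x : I -> set A) :
  finite_set F -> (forall i, F i -> W (x i)) -> W (\bigcup_(i in F) x i).
Proof.
move=> /(@finite_seqP {classic I}) [s ->] Wx; rewrite (bigcup_seq s x) big_seq.
have [W0 _ _] := PW.
by elim/big_ind: _ => [//|X Y|i /Wx //]; exact: pratt_setU.
Qed.

End PrattComonoid.

Theorem lemma4p1 (A : Type) (W : set (set A)) (I : Type) (x : I -> set A) :
  pratt_comonoid W ->
  (forall i, W (x i)) ->
  (forall a : A, finite_set [set i | x i a]) ->
  W (\bigcup_(i in [set: I]) x i).
Proof.
move=> PW Wx xfin; have [_ _ crossW] := PW.
pose C : set (A * A) := [set p | exists2 i, x i p.1 & x i p.2].
have -> : \bigcup_(i in [set: I]) x i = Defs.diagonal C.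
  by apply/seteqP; split=> b /= [i]; exists i.
have row a : W [set b | C (a, b)].
  have -> : [set b | C (a, b)] = \bigcup_(i in [set i | x i a]) x i by [].
  exact: pratt_bigcup_finite.
apply: crossW => a; split; first exact: row.
by rewrite (_ : [set b | C (b, a)] = [set b | C (a, b)]) //;
  apply/seteqP; split=> b /= [i]; exists i.
Qed.
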